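(* Let $\{\varphi_n\}$ be a generalized Riesz system in a Hilbert space $\mathcal H$ with constructing pair $(\{e_n\},T)$, and put $\psi^T_n=(T^{-1})^*e_n$, $n\ge0$. Suppose that $\{e_n\}\subset D(T^*T)\cap D(T^{-1}(T^{-1})^* )$. Then $(\{\varphi_n\},\{\psi^T_n\})$ is a $(D(T^* )\cap D(T^{-1}))$-quasi basis, and $T=\big(\overline{T_{e,\psi^T}|_{D(T^* )\cap D(T^{-1})}}\big)^{-1}$, $(T^{-1})^*=\big(\overline{T_{e,\varphi}|_{D(T^* )\cap D(T^{-1})}}\big)^{-1}$.
   Context: A sequence $\{\varphi_n\}$ is a generalized Riesz system if there exist an ONB $\{e_n\}$ and a densely defined closed operator $T$ with densely defined inverse such that $e_n\in D(T)\cap D((T^{-1})^* )$ and $Te_n=\varphi_n$ for all $n$; $(\{e_n\},T)$ is a constructing pair. Inner product linear in the first argument. For a sequence $\{\chi_n\}$, $D(\chi)=\{x:\sum_n|\langle x,\chi_n\rangle|^2<\infty\}$ and $D_\chi$ is its linear span; $T_{e,\chi}$ is the operator with domain $D(\chi)$, $T_{e,\chi}x=\sum_n\langle x,\chi_n\rangle e_n$. For biorthogonal sequences $\{\varphi_n\},\{\psi_n\}$ and a dense subspace $\mathcal D$ with $D_\varphi\cup D_\psi\subseteq\mathcal D\subseteq D(\varphi)\cap D(\psi)$, the pair is a $\mathcal D$-quasi basis if $\sum_k\langle x,\varphi_k\rangle\langle\psi_k,y\rangle=\langle x,y\rangle$ for all $x,y\in\mathcal D$. Bars denote closures, $|$ restrictions.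 *)

From HB Require Import structures.
From mathcomp Require Import all_boot all_order all_algebra.
From mathcomp Require Import all_classical all_reals all_analysis.
From mathcomp Require Import complex.
Set Implicit Arguments. Unset Strict Implicit. Unset Printing Implicit Defensive.
Import Order.TTheory GRing.Theory Num.Theory.
Import numFieldNormedType.Exports.
Local Open Scope ring_scope.
Local Open Scope classical_set_scope.

(* The complex numbers over a real type, seen as a numFieldType
   (so that normed modules over them are available). *)
Definition C (R : realType) : numFieldType := R[i].

Section Hilbert.
Variables (R : realType) (H : completeNormedModType (C R)).

(* [ip] is an inner product, linear in the first argument, inducing the norm
   of H.  Together with completeness of H this makes H a Hilbert space. *)
Record inner_product (ip : H -> H -> R[i]) : Prop := {
  ipD : forall x y z, ip (x + y) z = ip x z + ip y z;
  ipZ : forall (a : C R) x y, ip (a *: x) y = (a : R[i]) * ip x y;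
  ip_sym : forall x y, ip y x = conjc (ip x y);
  ip_pos : forall x, x != 0 -> 0 < ip x x;
  ip_norm : forall x, ((`|x| : C R) : R[i]) ^+ 2 = ip x x }.

Variable ip : H -> H -> R[i].

(* Operators are represented by their graphs. *)
Definition op := set (H * H).

Definition opdom (T : op) : set H := [set x | exists y, T (x, y)].
Definition opran (T : op) : set H := [set y | exists x, T (x, y)].

Definition linear_opr (T : op) : Prop :=
  [/\ T (0, 0),
      (forall x y u v, T (x, y) -> T (u, v) -> T (x + u, y + v)),
      (forall (a : C R) x y, T (x, y) -> T (a *: x, a *: y)) &
      (forall x y1 y2, T (x, y1) -> T (x, y2) -> y1 = y2)].

Definition hdense (A : set H) : Prop := closure A = setT.

Definition closed_opr (T : op) : Prop := closed T.

Definition opinv (T : op) : op := [set p | T (p.2, p.1)].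

Definition injective_opr (T : op) : Prop :=
  forall x1 x2 y, T (x1, y) -> T (x2, y) -> x1 = x2.

Definition opadj (T : op) : op :=
  [set p | forall x y, T (x, y) -> ip y p.1 = ip x p.2].

Definition opcomp (S T : op) : op :=
  [set p | exists z, T (p.1, z) /\ S (z, p.2)].

Definition oprestr (T : op) (D : set H) : op := [set p | T p /\ D p.1].

Definition opclosure (T : op) : op := closure T.

Definition ONB (e : nat -> H) : Prop :=
  (forall n m, ip (e n) (e m) = (n == m)%:R) /\
  (forall x, (fun N => \sum_(n < N) (ip x (e n) : C R) *: e n) @ \oo --> x).

Definition Dseq (chi : nat -> H) : set H :=
  [set x | cvgn (series (fun n => Normc.normc (ip x (chi n)) ^+ 2))].

Definition sspan (chi : nat -> H) : set H :=
  [set x | exists (N : nat) (a : nat -> C R), x = \sum_(n < N) a n *: chi n].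

Definition T_e_chi (e chi : nat -> H) : op :=
  [set p | Dseq chi p.1 /\
     (fun N => \sum_(n < N) (ip p.1 (chi n) : C R) *: e n) @ \oo --> p.2].

Definition constructing_pair (e : nat -> H) (T : op) (phi : nat -> H) : Prop :=
  [/\ ONB e, linear_opr T, hdense (opdom T), closed_opr T &
      [/\ injective_opr T, hdense (opdom (opinv T)) &
      forall n, [/\ opdom T (e n), opdom (opadj (opinv T)) (e n) & T (e n, phi n)]]].

Definition biorthogonal (phi psi : nat -> H) : Prop :=
  forall n m, ip (phi n) (psi m) = (n == m)%:R.

Definition quasi_basis (phi psi : nat -> H) (D : set H) : Prop :=
  [/\ biorthogonal phi psi, hdense D,
      sspan phi `|` sspan psi `<=` D, D `<=` Dseq phi `&` Dseq psi &
      forall x y, D x -> D y ->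
        series (fun k => (ip x (phi k) * ip (psi k) y : C R)) @ \oo --> (ip x y : C R)].

End Hilbert.

(* On D = D(T^* ) ∩ D(T^-1) the coefficients of phi_n and psi^T_n are those of
   e_n transported by T^* and T^-1: <x, phi_n> = <T^* x, e_n> and
   <T u, psi_n> = <u, e_n>.  Hence the quasi-basis identity on D is Parseval's
   identity for <T^* x, u> = <x, T u>, T_{e,psi}|_D is the inverse of T
   restricted to D(T^*T), and T_{e,phi}|_D is T^* restricted to the range of T.
   The two closure identities therefore say that D(T^*T) is a core for T and
   R(T) ∩ D(T^* ) a core for T^*.  Both follow from von Neumann's argument: by
   the projection theorem in H x H, the graph of T and {(-T^* z, z)} are
   orthogonal complements, so I + T^*T is onto, and an element of the graph
   orthogonal to the restricted graph must vanish. *)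

From HB Require Import structures.
From mathcomp Require Import all_boot all_order all_algebra.
From mathcomp Require Import all_classical all_reals all_analysis.
From mathcomp Require Import complex.
From mathcomp Require Import ring lra.
Set Implicit Arguments. Unset Strict Implicit. Unset Printing Implicit Defensive.
Import Order.TTheory GRing.Theory Num.Theory.
Import numFieldNormedType.Exports.
Local Open Scope ring_scope.
Local Open Scope classical_set_scope.

Local Notation Re := complex.Re.
Local Notation Im := complex.Im.

Section ComplexFacts.
Variable R : realType.
Local Open Scope complex_scope.
Implicit Types a b : R[i].

Lemma complex_ext a b : Re a = Re b -> Im a = Im b -> a = b.
Proof. by case: a b => ? ? [? ?] /= -> ->. Qed.

Lemma Re_mulc a b : Re (a * b) = Re a * Re b - Im a * Im b.
Proof. by case: a b => ? ? []. Qed.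

Lemma Im_mulc a b : Im (a * b) = Re a * Im b + Im a * Re b.
Proof. by case: a b => ? ? []. Qed.

Lemma Re_conjc a : Re (conjc a) = Re a. Proof. by case: a. Qed.

Lemma Im_conjc a : Im (conjc a) = - Im a. Proof. by case: a. Qed.

Definition sqnormc a : R := Re a ^+ 2 + Im a ^+ 2.

Lemma sqnormc_ge0 a : 0 <= sqnormc a.
Proof. by rewrite addr_ge0 // sqr_ge0. Qed.

Lemma sqnormc_eq0 a : sqnormc a = 0 -> a = 0.
Proof.
rewrite /sqnormc => a0; have := sqr_ge0 (Re a); have := sqr_ge0 (Im a).
by move=> *; apply: complex_ext => /=; nra.
Qed.

Lemma sqnormcN a : sqnormc (- a) = sqnormc a.
Proof. by rewrite /sqnormc !raddfN /= !sqrrN. Qed.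

Lemma sqnormcB_le a b : sqnormc (a - b) <= 2 * (sqnormc a + sqnormc b).
Proof.
rewrite /sqnormc !raddfB /=.
by have := sqr_ge0 (Re a + Re b); have := sqr_ge0 (Im a + Im b); nra.
Qed.

Lemma mulcJ_sqnormc a : a * conjc a = (sqnormc a)%:C.
Proof.
by apply: complex_ext; rewrite ?Re_mulc ?Im_mulc Re_conjc Im_conjc /sqnormc /=; ring.
Qed.

Lemma sqr_normc_sqnormc a : Normc.normc a ^+ 2 = sqnormc a.
Proof. by case: a => x y /=; rewrite sqr_sqrtr // addr_ge0 // sqr_ge0. Qed.

Lemma gt0_complex_real (z : R[i]) : 0 < z -> z = (Re z)%:C /\ 0 < Re z.
Proof.
by case: z => a b; rewrite ltcE /= => /andP[/eqP -> a_gt0].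
Qed.

Lemma ler0_mul_small (x c : R) : 0 <= c -> (forall e, 0 < e -> x <= c * e) -> x <= 0.
Proof.
move=> c_ge0 small; apply/ler_addgt0Pr => e e_gt0; rewrite add0r.
have := small (e / (c + 1)) (divr_gt0 e_gt0 (ltr_wpDl c_ge0 ltr01)).
move/le_trans; apply; rewrite mulrCA ger_pMr // ler_pdivrMr ?mul1r ?lerDl //.
exact: ltr_wpDl c_ge0 ltr01.
Qed.

Lemma cvg_sqnormc (f : nat -> C R) c :
  (forall eps : R, 0 < eps -> \forall n \near \oo, sqnormc (f n - c) < eps) ->
  f @ \oo --> c.
Proof.
move=> fc; apply/cvgrPdist_lt => eps eps_gt0.
have [-> r_gt0] := gt0_complex_real eps_gt0.
apply: filterS (fc _ (exprn_gt0 2 r_gt0)) => n fn.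
rewrite normc_def ltcR -[ltRHS](ger0_norm (ltW r_gt0)) -sqrtr_sqr.
by rewrite ltr_sqrt ?exprn_gt0 //; rewrite -sqnormcN opprB in fn.
Qed.

Lemma cvg_complex_real (r : nat -> R) (l : R) :
  (fun n => (r n)%:C : C R) @ \oo --> (l%:C : C R) -> r @ \oo --> l.
Proof.
move=> /cvgrPdist_lt rl; apply/cvgrPdist_lt => eps eps_gt0.
have : 0 < eps%:C by rewrite -[0]/(0%:C) ltcR.
move=> /rl; apply: filterS => n.
by rewrite -raddfB normc_def /= expr0n addr0 sqrtr_sqr ltcR.
Qed.

End ComplexFacts.

Section PreHilbert.
Variables (R : realType) (V : lmodType (C R)) (ip : V -> V -> R[i]).
Local Open Scope complex_scope.

Record positive_hermitian_form : Prop := {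
  hermD : forall x y z, ip (x + y) z = ip x z + ip y z;
  hermZ : forall (a : C R) x y, ip (a *: x) y = (a : R[i]) * ip x y;
  herm_sym : forall x y, ip y x = conjc (ip x y);
  herm_pos : forall x, x != 0 -> 0 < ip x x }.

Hypothesis hip : positive_hermitian_form.

Lemma ip0l x : ip 0 x = 0.
Proof. by rewrite -(scale0r (0 : V)) (hermZ hip) mul0r. Qed.

Lemma ipNl x y : ip (- x) y = - ip x y.
Proof. by rewrite -scaleN1r (hermZ hip) mulN1r. Qed.

Lemma ipBl x y z : ip (x - y) z = ip x z - ip y z.
Proof. by rewrite (hermD hip) ipNl. Qed.

Lemma ipJ x y : conjc (ip x y) = ip y x.
Proof. by rewrite (herm_sym hip y x) conjcK. Qed.

Lemma ipDr x y z : ip x (y + z) = ip x y + ip x z.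
Proof. by rewrite (herm_sym hip) (hermD hip) rmorphD; congr (_ + _); apply: ipJ. Qed.

Lemma ipZr (a : C R) x y : ip x (a *: y) = conjc (a : R[i]) * ip x y.
Proof. by rewrite (herm_sym hip) (hermZ hip) rmorphM; congr (_ * _); apply: ipJ. Qed.

Lemma ip0r x : ip x 0 = 0.
Proof. by apply: (addrI (ip x 0)); rewrite -ipDr !addr0. Qed.

Lemma ipNr x y : ip x (- y) = - ip x y.
Proof. by apply/eqP; rewrite -addr_eq0 -ipDr addNr ip0r. Qed.

Lemma ipBr x y z : ip x (y - z) = ip x y - ip x z.
Proof. by rewrite ipDr ipNr. Qed.

Lemma ip_sum (a : nat -> C R) (v : nat -> V) y N :
  ip (\sum_(n < N) a n *: v n) y = \sum_(n < N) a n * ip (v n) y.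
Proof.
elim: N => [|N IH]; first by rewrite !big_ord0 ip0l.
by rewrite !big_ord_recr /= (hermD hip) IH (hermZ hip).
Qed.

Definition sqnorm x : R := Re (ip x x).

Lemma ip_sqnorm x : ip x x = (sqnorm x)%:C.
Proof.
apply: complex_ext => //=.
by have := congr1 (@complex.Im R) (herm_sym hip x x); rewrite Im_conjc /=; lra.
Qed.

Lemma sqnorm_ge0 x : 0 <= sqnorm x.
Proof.
have [->|x0] := eqVneq x 0; first by rewrite /sqnorm ip0l.
by have := herm_pos hip x0; rewrite ip_sqnorm ltcR => /ltW.
Qed.

Lemma sqnorm_gt0 x : x != 0 -> 0 < sqnorm x.
Proof. by move=> x0; have := herm_pos hip x0; rewrite ip_sqnorm ltcR. Qed.

Lemma sqnorm_eq0 x : sqnorm x = 0 -> x = 0.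
Proof.
by have [//|/sqnorm_gt0] := eqVneq x 0; rewrite lt_neqAle eq_sym => /andP[/eqP].
Qed.

Lemma sqnormN x : sqnorm (- x) = sqnorm x.
Proof. by rewrite /sqnorm ipNl ipNr opprK. Qed.

Lemma sqnormD x y : sqnorm (x + y) = sqnorm x + sqnorm y + 2 * Re (ip x y).
Proof.
by rewrite /sqnorm (hermD hip) !ipDr !raddfD /= (herm_sym hip y x) Re_conjc; ring.
Qed.

Lemma sqnormB x y : sqnorm (x - y) = sqnorm x + sqnorm y - 2 * Re (ip x y).
Proof. by rewrite sqnormD sqnormN ipNr raddfN /=; ring. Qed.

Lemma sqnormZ (a : C R) x : sqnorm (a *: x) = sqnormc a * sqnorm x.
Proof.
by rewrite /sqnorm (hermZ hip) ipZr mulrA mulcJ_sqnormc ip_sqnorm Re_mulc /=; ring.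
Qed.

Lemma sqnorm_parallelogram x y :
  sqnorm (x + y) + sqnorm (x - y) = 2 * sqnorm x + 2 * sqnorm y.
Proof. by rewrite sqnormB sqnormD; ring. Qed.

Lemma sqnormD_le x y : sqnorm (x + y) <= 2 * (sqnorm x + sqnorm y).
Proof. by have := sqnorm_parallelogram x y; have := sqnorm_ge0 (x - y); lra. Qed.

Lemma sqnorm_midpoint p x y :
  sqnorm (x - y) + 4 * sqnorm (p - (2%:R : C R)^-1 *: (x + y)) =
  2 * sqnorm (p - x) + 2 * sqnorm (p - y).
Proof.
have := sqnorm_parallelogram (p - x) (p - y).
have -> : (p - x) - (p - y) = - (x - y) by rewrite !opprB [LHS]addrC addrA subrK.
have -> : (p - x) + (p - y) = (2%:R : C R) *: (p - (2%:R : C R)^-1 *: (x + y)).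
  by rewrite scalerBr scalerA divff ?pnatr_eq0 // scale1r scaler_nat mulr2n
    addrACA opprD.
rewrite sqnormN sqnormZ.
have -> : sqnormc (2%:R : C R) = 4 by rewrite /sqnormc /=; ring.
by move=> <-; ring.
Qed.

(* [((sqnorm y)^-1%:C * ip x y) *: y] is the orthogonal projection of [x] on
   the line spanned by [y]. *)
Lemma sqnorm_sub_proj x y : y != 0 ->
  sqnorm (x - ((sqnorm y)^-1%:C * ip x y) *: y) =
  sqnorm x - sqnormc (ip x y) / sqnorm y.
Proof.
move=> y0; rewrite sqnormB sqnormZ ipZr /sqnormc.
rewrite ?(Re_mulc, Im_mulc, Re_conjc, Im_conjc) /=; field.
by rewrite gt_eqF // sqnorm_gt0.
Qed.

Lemma cauchy_schwarz x y : sqnormc (ip x y) <= sqnorm x * sqnorm y.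
Proof.
have [->|y0] := eqVneq y 0.
  by rewrite ip0r /sqnormc /sqnorm ip0l /= expr0n addr0 mulr0.
have := sqnorm_ge0 (x - ((sqnorm y)^-1%:C * ip x y) *: y).
by rewrite sqnorm_sub_proj // subr_ge0 ler_pdivrMr // sqnorm_gt0.
Qed.

(* Convergence for the norm induced by [ip]; [V] itself carries no topology. *)
Definition sqcvg (u : nat -> V) l :=
  forall eps : R, 0 < eps -> \forall n \near \oo, sqnorm (u n - l) < eps.

Definition sqcauchy (u : nat -> V) :=
  forall eps : R, 0 < eps -> \forall n & m \near \oo, sqnorm (u n - u m) < eps.

Definition seq_closure (M : set V) l :=
  exists2 m : nat -> V, (forall k, M (m k)) & sqcvg m l.

Definition is_subspace (M : set V) :=
  [/\ M 0, forall x y, M x -> M y -> M (x + y) &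
      forall (a : C R) x, M x -> M (a *: x)].

Lemma subspaceN (M : set V) x : is_subspace M -> M x -> M (- x).
Proof. by case=> _ _ MZ /(MZ (-1)); rewrite scaleN1r. Qed.

Lemma subspace_sum (M : set V) (v : nat -> V) (a : nat -> C R) N :
  is_subspace M -> (forall n, M (v n)) -> M (\sum_(n < N) a n *: v n).
Proof.
case=> M0 MD MZ Mv; elim: N => [|N IH]; first by rewrite big_ord0.
by rewrite big_ord_recr; apply: MD => //; apply: MZ.
Qed.

Lemma subspaceI (M N : set V) : is_subspace M -> is_subspace N -> is_subspace (M `&` N).
Proof.
case=> M0 MD MZ [N0 ND NZ]; split=> // [x y [Mx Nx] [My Ny]|a x [Mx Nx]].
- by split; [apply: MD | apply: ND].
- by split; [apply: MZ | apply: NZ].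
Qed.

Lemma subspaceB (M : set V) x y : is_subspace M -> M x -> M y -> M (x - y).
Proof. by move=> subM Mx /(subspaceN subM); case: subM => _ MD _; apply: MD. Qed.

Section MinimizingSequence.
Variables (M : set V) (p : V) (d : R) (m : nat -> V).
Hypotheses (subM : is_subspace M) (Mm : forall k, M (m k)).
Hypothesis d_le : forall x, M x -> d <= sqnorm (p - x).
Hypothesis m_min : forall k, sqnorm (p - m k) < d + k.+1%:R^-1.

Lemma minimizing_sqcauchy : sqcauchy m.
Proof.
move=> eps eps_gt0; case: subM => _ MD MZ.
have small := near_infty_natSinv_lt (PosNum (divr_gt0 eps_gt0 (ltr0n R 4))).
near=> i j => /=.
have dz := d_le (MZ (2%:R : C R)^-1 _ (MD _ _ (Mm i) (Mm j))).
have := sqnorm_midpoint p (m i) (m j).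
set z := sqnorm (p - _ *: _) in dz *.
have := m_min i; have := m_min j.
have : i.+1%:R^-1 < eps / 4 by near: i.
have : j.+1%:R^-1 < eps / 4 by near: j.
set ui := i.+1%:R^-1; set uj := j.+1%:R^-1; lra.
Unshelve. all: by end_near.
Qed.

(* Moving [m k] along [x] cannot get below the infimum [d], which makes
   [ip (p - m k) x] tend to zero; its limit is [ip (p - l) x]. *)
Lemma minimizing_limit_orthogonal l : sqcvg m l -> forall x, M x -> ip (p - l) x = 0.
Proof.
move=> ml x Mx; case: subM => _ MD MZ.
have [->|x0] := eqVneq x 0; first exact: ip0r.
have x_gt0 := sqnorm_gt0 x0.
have ck_small k : sqnormc (ip (p - m k) x) < sqnorm x * k.+1%:R^-1.
  have := d_le (MD _ _ (Mm k) (MZ ((sqnorm x)^-1%:C * ip (p - m k) x) _ Mx)).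
  rewrite opprD addrA sqnorm_sub_proj // => h.
  have : sqnormc (ip (p - m k) x) / sqnorm x < k.+1%:R^-1.
    by have := m_min k; set u := k.+1%:R^-1; set q := sqnormc _ / _ in h *; lra.
  by rewrite ltr_pdivrMr // mulrC.
apply: sqnormc_eq0; apply/eqP; rewrite eq_le sqnormc_ge0 andbT.
apply/ler_addgt0Pr => eps eps_gt0; rewrite add0r.
pose e := eps / (4 * sqnorm x).
have e_gt0 : 0 < e by rewrite divr_gt0 // mulr_gt0.
have eE : sqnorm x * e = eps / 4 by rewrite /e; field; rewrite gt_eqF.
have small := near_infty_natSinv_lt (PosNum e_gt0).
have [k [uk mlk]] : exists k, k.+1%:R^-1 < e /\ sqnorm (m k - l) < e.
  apply: (@filter_ex _ \oo); near=> k; split; near: k; [exact: small | exact: ml].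
have -> : ip (p - l) x = ip (p - m k) x - ip (l - m k) x.
  by rewrite -ipBl opprB addrA subrK.
apply: (le_trans (sqnormcB_le _ _)).
have := cauchy_schwarz (l - m k) x; rewrite -sqnormN opprB.
have := ck_small k; have := sqnorm_ge0 (m k - l); move: uk; set u := k.+1%:R^-1.
nra.
Unshelve. all: by end_near.
Qed.

End MinimizingSequence.

Hypothesis sqcomplete : forall u, sqcauchy u -> exists l, sqcvg u l.

Theorem orthogonal_projection (M : set V) p : is_subspace M ->
  exists2 l, seq_closure M l & forall x, M x -> ip (p - l) x = 0.
Proof.
move=> subM; have M0 : M 0 by case: subM.
pose S := [set sqnorm (p - x) | x in M].
have S_lb : has_lbound S by exists 0 => _ [x _ <-]; apply: sqnorm_ge0.
have S_n0 : S !=set0 by exists (sqnorm (p - 0)), 0.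
have d_le x : M x -> inf S <= sqnorm (p - x) by move=> Mx; apply: ge_inf => //; exists x.
have /choice [m mP] : forall k, exists x, M x /\ sqnorm (p - x) < inf S + k.+1%:R^-1.
  move=> k; have k_gt0 : 0 < k.+1%:R^-1 :> R by [].
  by have [_ [x Mx <-]] := inf_adherent k_gt0 (conj S_n0 S_lb); exists x.
have Mm k : M (m k) by case: (mP k).
have m_min k : sqnorm (p - m k) < inf S + k.+1%:R^-1 by case: (mP k).
have [l ml] := sqcomplete (minimizing_sqcauchy subM Mm d_le m_min).
exists l; first by exists m.
exact: (minimizing_limit_orthogonal subM Mm d_le m_min ml).
Qed.

End PreHilbert.

Section HilbertSpace.
Variables (R : realType) (H : completeNormedModType (C R)) (ip : H -> H -> R[i]).
Hypothesis hip : inner_product ip.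
Local Open Scope complex_scope.
Local Notation sqn := (sqnorm ip).

Lemma inner_product_hermitian : positive_hermitian_form ip.
Proof. by case: hip => *; split. Qed.

Local Notation hH := inner_product_hermitian.

Lemma normr_real (x : H) : `|x| = (Re `|x|)%:C.
Proof. by apply: complex_ext => //=; apply: ger0_Im. Qed.

Lemma normr_lt_sqnorm (x : H) (r : R) : 0 < r -> (`|x| < r%:C) = (sqn x < r ^+ 2).
Proof.
move=> r_gt0; set n := Re `|x|; have nE : `|x| = n%:C := normr_real x.
have n_ge0 : 0 <= n by have := normr_ge0 x; rewrite nE lecR.
have -> : sqn x = n ^+ 2 by rewrite /sqnorm -(ip_norm hip) nE -rmorphXn.
by rewrite nE ltcR ltr_sqr ?nnegrE // ltW.
Qed.

Lemma closureP_sqnorm (A : set H) z :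
  closure A z <-> forall eps : R, 0 < eps -> exists2 a, A a & sqn (z - a) < eps.
Proof.
split=> [clA eps eps_gt0|approx B /nbhs_ballP[r r_gt0 rB]].
  have s_gt0 : 0 < Num.sqrt eps by rewrite sqrtr_gt0.
  have [a [Aa]] : A `&` ball z (Num.sqrt eps)%:C !=set0.
    apply: clA; apply/nbhs_ballP.
    by exists (Num.sqrt eps)%:C => //=; rewrite -[0]/(0%:C) ltcR.
  rewrite -ball_normE /= normr_lt_sqnorm // sqr_sqrtr ?ltW // => za.
  by exists a.
have [rE r0] := gt0_complex_real r_gt0.
have [a Aa za] := approx _ (exprn_gt0 2 r0).
exists a => /=; split => //; apply: rB.
by rewrite -ball_normE /= rE normr_lt_sqnorm.
Qed.

Lemma closure2P_sqnorm (A : set (H * H)) p :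
  closure A p <-> forall eps : R, 0 < eps ->
    exists2 q, A q & sqn (p.1 - q.1) < eps /\ sqn (p.2 - q.2) < eps.
Proof.
split=> [clA eps eps_gt0|approx B /nbhs_ballP[r r_gt0 rB]].
  have s_gt0 : 0 < Num.sqrt eps by rewrite sqrtr_gt0.
  have [q [Aq [b1 b2]]] : A `&` ball p (Num.sqrt eps)%:C !=set0.
    apply: clA; apply/nbhs_ballP.
    by exists (Num.sqrt eps)%:C => //=; rewrite -[0]/(0%:C) ltcR.
  move: b1 b2; rewrite -!ball_normE /= !normr_lt_sqnorm // sqr_sqrtr ?ltW //.
  by exists q.
have [rE r0] := gt0_complex_real r_gt0.
have [q Aq [q1 q2]] := approx _ (exprn_gt0 2 r0).
exists q => /=; split => //; apply: rB.
by split; rewrite -ball_normE /= rE normr_lt_sqnorm.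
Qed.

Lemma cvg_sqcvg (u : nat -> H) l : u @ \oo --> l -> sqcvg ip u l.
Proof.
move=> /cvgrPdist_lt ul eps eps_gt0.
have s_gt0 : 0 < Num.sqrt eps by rewrite sqrtr_gt0.
have : 0 < (Num.sqrt eps)%:C by rewrite -[0]/(0%:C) ltcR.
move=> /ul; apply: filterS => n.
by rewrite normr_lt_sqnorm // sqr_sqrtr ?ltW // -(sqnormN hH) opprB.
Qed.

Lemma sqcomplete_Hilbert (u : nat -> H) : sqcauchy ip u -> exists l, sqcvg ip u l.
Proof.
move=> hc; have /cauchy_cvgP/cvg_ex[l ul] : cauchy (u @ \oo).
  apply/cauchy_ballP => eps eps_gt0; near_simpl.
  have [eE e0] := gt0_complex_real eps_gt0.
  apply: filterS (hc _ (exprn_gt0 2 e0)) => -[n m] /=.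
  by rewrite -ball_normE /= eE normr_lt_sqnorm.
by exists l; apply: cvg_sqcvg.
Qed.

Definition ip2 (p q : H * H) : R[i] := ip p.1 q.1 + ip p.2 q.2.

Lemma ip2_hermitian : positive_hermitian_form ip2.
Proof.
split=> [x y z|a x y|x y|[x1 x2] x0]; rewrite /ip2 /=.
- by rewrite !(hermD hH) addrACA.
- by rewrite !(hermZ hH) mulrDr.
- by rewrite rmorphD; congr (_ + _); apply: (herm_sym hH).
rewrite !(ip_sqnorm hH) -rmorphD -[0]/(0%:C) ltcR.
have [x1_0|x1_0] := eqVneq x1 0.
  have x2_0 : x2 != 0 by apply: contraNneq x0 => ->; rewrite x1_0.
  by have := sqnorm_gt0 hH x2_0; have := sqnorm_ge0 hH x1; lra.
by have := sqnorm_gt0 hH x1_0; have := sqnorm_ge0 hH x2; lra.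
Qed.

Lemma sqnorm_ip2 p : sqnorm ip2 p = sqn p.1 + sqn p.2.
Proof. by rewrite /sqnorm /ip2 raddfD. Qed.

Lemma sqcomplete_ip2 (u : nat -> H * H) : sqcauchy ip2 u -> exists l, sqcvg ip2 u l.
Proof.
move=> hc.
have [l1 ul1] : exists l, sqcvg ip (fun n => (u n).1) l.
  apply: sqcomplete_Hilbert => eps eps_gt0; apply: filterS (hc _ eps_gt0) => -[n m] /=.
  by rewrite sqnorm_ip2; have := sqnorm_ge0 hH ((u n).2 - (u m).2); lra.
have [l2 ul2] : exists l, sqcvg ip (fun n => (u n).2) l.
  apply: sqcomplete_Hilbert => eps eps_gt0; apply: filterS (hc _ eps_gt0) => -[n m] /=.
  by rewrite sqnorm_ip2; have := sqnorm_ge0 hH ((u n).1 - (u m).1); lra.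
exists (l1, l2) => eps eps_gt0; have e2 : 0 < eps / 2 by rewrite divr_gt0.
by apply: filterS2 (ul1 _ e2) (ul2 _ e2) => n; rewrite sqnorm_ip2 /=; lra.
Qed.

Lemma closure_seq_closure (A : set (H * H)) l : seq_closure ip2 A l -> closure A l.
Proof.
move=> [m Am ml]; apply/closure2P_sqnorm => eps eps_gt0.
have [n mn] := filter_ex (ml _ eps_gt0); exists (m n) => //.
move: mn; rewrite sqnorm_ip2 -(sqnormN hH (l.1 - _)) -(sqnormN hH (l.2 - _)) !opprB.
by have := sqnorm_ge0 hH ((m n).1 - l.1); have := sqnorm_ge0 hH ((m n).2 - l.2); lra.
Qed.

End HilbertSpace.

Section Operators.
Variables (R : realType) (H : completeNormedModType (C R)) (ip : H -> H -> R[i]).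
Hypothesis hip : inner_product ip.
Local Notation hH := (inner_product_hermitian hip).
Local Notation sqn := (sqnorm ip).

Lemma opinvK (T : op H) : opinv (opinv T) = T.
Proof. by apply/seteqP; split=> -[]. Qed.

Lemma closure_opinv (A : op H) : closure (opinv A) = opinv (closure A).
Proof.
apply/seteqP; split=> -[x y] /(closure2P_sqnorm hip) clA;
  apply/(closure2P_sqnorm hip) => eps /clA[[a b] Aab [xa yb]]; by exists (b, a).
Qed.

Lemma opadj_opinv (T : op H) : opadj ip (opinv T) = opinv (opadj ip T).
Proof. by apply/seteqP; split=> -[a b] adj x y Txy /=; symmetry; apply: adj. Qed.

Lemma linear_opr_subspace (T : op H) : linear_opr T -> is_subspace T.
Proof. by case=> T0 TD TZ _; split=> // [[x y] [u v]|a [x y]]; [apply: TD|apply: TZ]. Qed.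

Lemma opinv_subspace (A : op H) : is_subspace A -> is_subspace (opinv A).
Proof.
case=> A0 AD AZ; split=> // [[x y] [u v]|a [x y]].
- exact: (AD (y, x) (v, u)).
- exact: (AZ a (y, x)).
Qed.

Lemma opdom_subspace (A : op H) : is_subspace A -> is_subspace (opdom A).
Proof.
case=> A0 AD AZ; split; first by exists 0.
- by move=> x y [u Axu] [v Ayv]; exists (u + v); apply: (AD (x, u) (y, v)).
- by move=> a x [u Axu]; exists (a *: u); apply: (AZ a (x, u)).
Qed.

Lemma opcomp_subspace (A B : op H) :
  is_subspace A -> is_subspace B -> is_subspace (opcomp A B).
Proof.
case=> A0 AD AZ [B0 BD BZ]; split; first by exists 0.
- move=> [x y] [u v] [z [Bxz Azy]] [w [Buw Awv]]; exists (z + w).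
  by split; [apply: (BD (x, z) (u, w)) | apply: (AD (z, y) (w, v))].
- move=> a [x y] [z [Bxz Azy]]; exists (a *: z).
  by split; [apply: (BZ a (x, z)) | apply: (AZ a (z, y))].
Qed.

Lemma oprestr_subspace (A : op H) (D : set H) :
  is_subspace A -> is_subspace D -> is_subspace (oprestr A D).
Proof.
case=> A0 AD AZ [D0 DD DZ]; split=> // [[x y] [u v] [Axy Dx] [Auv Du]|a [x y] [Axy Dx]].
- by split; [apply: (AD (x, y) (u, v)) | apply: DD].
- by split; [apply: (AZ a (x, y)) | apply: DZ].
Qed.

Lemma adjoint_subspace (T : op H) : is_subspace (opadj ip T).
Proof.
split=> [x y _|[x w] [x' w'] adj adj' a b Tab|c [x w] adj a b Tab] /=.
- by rewrite !(ip0r hH).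
- by rewrite !(ipDr hH) (adj _ _ Tab) (adj' _ _ Tab).
- by rewrite !(ipZr hH) (adj _ _ Tab).
Qed.

Lemma orthogonal_closure (A : set H) a z :
  (forall y, A y -> ip a y = 0) -> closure A z -> ip a z = 0.
Proof.
move=> aA /(closureP_sqnorm hip) clA; apply: sqnormc_eq0; apply/eqP.
rewrite eq_le sqnormc_ge0 andbT; apply: (ler0_mul_small (sqnorm_ge0 hH a)) => e e_gt0.
have [y Ay zy] := clA e e_gt0.
rewrite -[ip a z]subr0 -(aA y Ay) -(ipBr hH).
apply: le_trans (cauchy_schwarz hH a (z - y)) _.
by apply: (ler_wpM2l (sqnorm_ge0 hH a)); apply: ltW.
Qed.

Lemma dense_orthogonal_eq0 (A : set H) z :
  hdense A -> (forall y, A y -> ip z y = 0) -> z = 0.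
Proof.
move=> dA zA; apply: (sqnorm_eq0 hH).
by rewrite /sqnorm (orthogonal_closure zA) ?dA.
Qed.

Lemma adjoint_fun (T : op H) x w1 w2 : hdense (opdom T) ->
  opadj ip T (x, w1) -> opadj ip T (x, w2) -> w1 = w2.
Proof.
move=> dT adj1 adj2; apply/eqP; rewrite -subr_eq0; apply/eqP.
apply: (dense_orthogonal_eq0 dT) => a [b Tab].
rewrite (ipBl hH) -(ipJ hH a w1) -(ipJ hH a w2).
by rewrite -(adj1 _ _ Tab) -(adj2 _ _ Tab) subrr.
Qed.

Lemma adjoint_closed (T : op H) : closed (opadj ip T).
Proof.
move=> p /(closure2P_sqnorm hip) clT x y Txy; apply/eqP; rewrite -subr_eq0; apply/eqP.
apply: sqnormc_eq0; apply/eqP; rewrite eq_le sqnormc_ge0 andbT.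
have c_ge0 : 0 <= 2 * (sqn y + sqn x).
  by rewrite mulr_ge0 // addr_ge0 // (sqnorm_ge0 hH).
apply: (ler0_mul_small c_ge0) => e e_gt0.
have [q adjq [q1 q2]] := clT e e_gt0.
have -> : ip y p.1 - ip x p.2 = ip y (p.1 - q.1) - ip x (p.2 - q.2).
  by rewrite !(ipBr hH) (adjq _ _ Txy) opprB addrA addrNK.
apply: le_trans (sqnormcB_le _ _) _.
have := cauchy_schwarz hH y (p.1 - q.1); have := cauchy_schwarz hH x (p.2 - q.2).
have := ler_wpM2l (sqnorm_ge0 hH y) (ltW q1).
have := ler_wpM2l (sqnorm_ge0 hH x) (ltW q2).
lra.
Qed.

Lemma closure_subspace_eq (M G : set (H * H)) :
  is_subspace M -> M `<=` G -> is_subspace G -> closed G ->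
  (forall g, G g -> (forall q, M q -> ip2 ip g q = 0) -> g = 0) ->
  closure M = G.
Proof.
move=> subM MG subG clG orth0; apply/seteqP; split.
  by apply: subset_trans clG; apply: closureS.
move=> g Gg.
have [l [m Mm ml] orth] :=
  orthogonal_projection (ip2_hermitian hip) (sqcomplete_ip2 hip) g subM.
have Ml : closure M l by apply: (closure_seq_closure hip); exists m.
have Gl : G l by apply/clG/(closureS MG).
by move/eqP: (orth0 _ (subspaceB subG Gg Gl) orth); rewrite subr_eq0 => /eqP ->.
Qed.

Section Cores.
Variable T : op H.
Hypotheses (Tlin : linear_opr T) (Tcl : closed_opr T).
Local Notation Ts := (opadj ip T).

Let subT : is_subspace T := linear_opr_subspace Tlin.
Let subTs : is_subspace Ts := adjoint_subspace T.

Lemma linear_opr_fun x y1 y2 : T (x, y1) -> T (x, y2) -> y1 = y2.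
Proof. by case: Tlin => _ _ _; apply. Qed.

Lemma graph_decomposition h : exists2 g, T g & Ts (h.2 - g.2, g.1 - h.1).
Proof.
have [l [m Tm ml] hl] :=
  orthogonal_projection (ip2_hermitian hip) (sqcomplete_ip2 hip) h subT.
have Tl : T l by apply: Tcl; apply: (closure_seq_closure hip); exists m.
exists l => // a b Tab /=.
have hz : ip (h.2 - l.2) b = - ip (h.1 - l.1) a.
  by apply/eqP; rewrite -addr_eq0 addrC; apply/eqP; apply: (hl (a, b)).
rewrite -(ipJ hH _ b) hz -[l.1 - h.1]opprB (ipNr hH) -(ipJ hH _ a); apply: rmorphN.
Qed.

Lemma surj_id_add_adjT_T h : exists v z, T (v, z) /\ Ts (z, h - v).
Proof.
have [[v y] Tvy /(subspaceN subTs) adj] := graph_decomposition (h, 0).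
change (Ts (- (0 - y), - (v - h))) in adj.
by rewrite sub0r opprK opprB in adj; exists v, y.
Qed.

Lemma dom_adjT_T x y : T (x, y) -> opdom (opcomp Ts T) x <-> opdom Ts y.
Proof.
move=> Txy; split=> [[w [z [Txz adj]]]|[w adj]]; last by exists w, y.
by exists w; rewrite (linear_opr_fun Txy Txz).
Qed.

Lemma core_dom_adjT_T : closure (oprestr T (opdom (opcomp Ts T))) = T.
Proof.
set M := oprestr T _.
have subM : is_subspace M.
  exact: oprestr_subspace subT (opdom_subspace (opcomp_subspace subTs subT)).
apply: closure_subspace_eq subM _ subT Tcl _ => [p []//|[a b] Tab orth].
have [v [z [Tvz adj]]] := surj_id_add_adjT_T a.
have Mvz : M (v, z) by split=> //; apply/(dom_adjT_T Tvz); exists (a - v).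
have a0 : a = 0.
  apply: (sqnorm_eq0 hH); have := orth _ Mvz; rewrite /ip2 /=.
  by rewrite (adj _ _ Tab) (ipBr hH) addrC subrK /sqnorm => ->.
have b0 : b = 0 by move: Tab; rewrite a0 => /linear_opr_fun; apply; case: subT.
by rewrite a0 b0.
Qed.

(* An element [(a, b)] of the graph of [T^*] orthogonal to the restricted graph
   has [b = 0] (decompose [(0, a)] along the graph of [T]), and then [a] is
   orthogonal to the range of [T], which is dense. *)
Lemma core_range_adjT : hdense (opdom (opinv T)) ->
  closure (oprestr Ts (opdom (opinv T))) = Ts.
Proof.
move=> dTi; set M := oprestr Ts _.
have subM : is_subspace M.
  exact: oprestr_subspace subTs (opdom_subspace (opinv_subspace subT)).
apply: closure_subspace_eq subM _ subTs (@adjoint_closed T) _ => [p []//|[a b] Tsab orth].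
have b0 : b = 0.
  have [[v y] Tvy adj] := graph_decomposition (0, a).
  change (Ts (a - y, v - 0)) in adj; rewrite subr0 in adj.
  have My : M (y, b - v).
    split; last by exists v.
    have := subspaceB subTs Tsab adj.
    by change (Ts (a - (a - y), b - v) -> Ts (y, b - v)); rewrite subKr.
  apply: (sqnorm_eq0 hH); have := orth _ My; rewrite /ip2 /=.
  by rewrite -(ipJ hH y a) (Tsab _ _ Tvy) (ipJ hH) (ipBr hH) addrC subrK /sqnorm => ->.
suff -> : a = 0 by rewrite b0.
apply: (dense_orthogonal_eq0 dTi) => y [u Tuy].
apply: (orthogonal_closure (A := [set q.2 | q in oprestr T (opdom (opcomp Ts T))])).
  move=> _ [[q1 q2] [Tq /(dom_adjT_T Tq) [w adj]] <-] /=.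
  have Mq : M (q2, w) by split=> //; exists q1.
  by have := orth _ Mq; rewrite /ip2 /= b0 (ip0l hH) addr0.
have : closure (oprestr T (opdom (opcomp Ts T))) (u, y) by rewrite core_dom_adjT_T.
move=> /(closure2P_sqnorm hip) clT; apply/(closureP_sqnorm hip) => e /clT[q Mq [_ q2]].
by exists q.2 => //; exists q.
Qed.

End Cores.

End Operators.

Section OrthonormalBasis.
Variables (R : realType) (H : completeNormedModType (C R)) (ip : H -> H -> R[i]).
Hypothesis hip : inner_product ip.
Variable e : nat -> H.
Hypothesis eONB : ONB ip e.
Local Open Scope complex_scope.
Local Notation hH := (inner_product_hermitian hip).

Lemma ip_cvgl (u : nat -> H) x y :
  u @ \oo --> x -> (fun n => ip (u n) y : C R) @ \oo --> (ip x y : C R).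
Proof.
move=> /(cvg_sqcvg hip) ux; apply: cvg_sqnormc => eps eps_gt0.
have y_ge0 := sqnorm_ge0 hH y.
have d_gt0 : 0 < eps / (sqnorm ip y + 1) by rewrite divr_gt0 // ltr_wpDl.
apply: filterS (ux _ d_gt0) => n un.
rewrite -(ipBl hH); apply: le_lt_trans (cauchy_schwarz hH _ _) _.
apply: le_lt_trans (ler_wpM2r y_ge0 (ltW un)) _.
rewrite mulrAC ltr_pdivrMr ?ltr_wpDl // ltr_pM2l //; lra.
Qed.

Lemma parseval x y :
  series (fun k => ip x (e k) * ip (e k) y : C R) @ \oo --> (ip x y : C R).
Proof.
have -> : series (fun k => ip x (e k) * ip (e k) y) =
          (fun N => ip (\sum_(n < N) ip x (e n) *: e n) y).
  apply: funext => N /=.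
  by rewrite (ip_sum hH (fun n => ip x (e n))) /series /= big_mkord.
exact: ip_cvgl (proj2 eONB x).
Qed.

Lemma Dseq_ext (chi chi' : nat -> H) x x' :
  (forall n, ip x (chi n) = ip x' (chi' n)) -> Dseq ip chi' x' -> Dseq ip chi x.
Proof.
move=> chiE; rewrite /Dseq /=.
suff -> : (fun n => Normc.normc (ip x (chi n)) ^+ 2) =
          (fun n => Normc.normc (ip x' (chi' n)) ^+ 2) by [].
by apply: funext => n; rewrite chiE.
Qed.

Lemma Dseq_ONB : Dseq ip e = setT.
Proof.
apply/seteqP; split=> // w _; apply/cvg_ex; exists (sqnorm ip w).
apply: cvg_complex_real; rewrite -(ip_sqnorm hH).
have <- : series (fun k => ip w (e k) * ip (e k) w) =
          (fun n => (series (fun k => Normc.normc (ip w (e k)) ^+ 2) n)%:C).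
  apply: funext => n; rewrite /series /= raddf_sum; apply: eq_bigr => k _.
  by rewrite (herm_sym hH w (e k)) mulcJ_sqnormc sqr_normc_sqnormc.
exact: parseval.
Qed.

Lemma cvg_ONB_expansion (chi : nat -> H) x w : (forall n, ip x (chi n) = ip w (e n)) ->
  (fun N => \sum_(n < N) (ip x (chi n) : C R) *: e n) @ \oo --> w.
Proof.
move=> chiE; have -> : (fun N => \sum_(n < N) (ip x (chi n) : C R) *: e n) =
    (fun N => \sum_(n < N) (ip w (e n) : C R) *: e n).
  by apply: funext => N; apply: eq_bigr => n _; rewrite chiE.
exact: (proj2 eONB w).
Qed.

End OrthonormalBasis.

Section ConstructingPair.
Variables (R : realType) (H : completeNormedModType (C R)) (ip : H -> H -> R[i]).
Variables (e phi psi : nat -> H) (T : op H).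
Hypotheses (hip : inner_product ip) (HT : constructing_pair ip e T phi).
Hypothesis Hpsi : forall n, opadj ip (opinv T) (e n, psi n).
Hypothesis He : forall n, opdom (opcomp (opadj ip T) T) (e n) /\
                          opdom (opcomp (opinv T) (opadj ip (opinv T))) (e n).
Local Notation hH := (inner_product_hermitian hip).
Local Notation Ts := (opadj ip T).
Local Notation D := (opdom (opadj ip T) `&` opdom (opinv T)).

Let eONB : ONB ip e. Proof. by case: HT. Qed.
Let Tlin : linear_opr T. Proof. by case: HT. Qed.
Let Tcl : closed_opr T. Proof. by case: HT. Qed.
Let Tinv_dense : hdense (opdom (opinv T)). Proof. by case: HT => _ _ _ _ []. Qed.
Let Tphi n : T (e n, phi n). Proof. by case: HT => _ _ _ _ [_ _ /(_ n) []]. Qed.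

Lemma ip_phi x w n : Ts (x, w) -> ip x (phi n) = ip w (e n).
Proof. by move=> adj; rewrite -(ipJ hH (phi n)) (adj _ _ (Tphi n)) (ipJ hH). Qed.

Lemma ip_psi u y n : T (u, y) -> ip y (psi n) = ip u (e n).
Proof. by move=> Tuy; rewrite (Hpsi n Tuy). Qed.

Lemma phi_D n : D (phi n).
Proof.
split; last by exists (e n); apply: Tphi.
by apply/(dom_adjT_T ip Tlin (Tphi n)); case: (He n).
Qed.

Lemma psi_D n : D (psi n).
Proof.
split.
  by exists (e n); move: (Hpsi n); rewrite opadj_opinv.
case: (He n) => _ [w [z [adj Tzw]]].
by exists w; rewrite (adjoint_fun hip Tinv_dense (Hpsi n) adj).
Qed.

Lemma D_subspace : is_subspace D.
Proof.
have subT := linear_opr_subspace Tlin.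
exact: subspaceI (opdom_subspace (adjoint_subspace hip T))
                 (opdom_subspace (opinv_subspace subT)).
Qed.

Lemma D_dense : hdense D.
Proof.
apply/seteqP; split=> // z _; apply/(closureP_sqnorm hip) => eps eps_gt0.
have e4 : 0 < eps / 4 by rewrite divr_gt0.
have : closure (opdom (opinv T)) z by rewrite Tinv_dense.
move=> /(closureP_sqnorm hip) /(_ _ e4) [y [u Tuy] zy].
have : closure (oprestr T (opdom (opcomp Ts T))) (u, y).
  by rewrite (core_dom_adjT_T hip Tlin Tcl).
move=> /(closure2P_sqnorm hip) /(_ _ e4) [[q1 q2] [Tq /(dom_adjT_T ip Tlin Tq) Tsq]].
move=> [_ yq].
exists q2; first by split; last exists q1.
have -> : z - q2 = (z - y) + (y - q2) by rewrite addrA subrK.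
by apply: le_lt_trans (sqnormD_le hH _ _) _; lra.
Qed.

Lemma D_Dseq : D `<=` Dseq ip phi `&` Dseq ip psi.
Proof.
move=> x [[w adj] [u Tux]]; split.
- by apply: Dseq_ext (fun n => ip_phi n adj) _; rewrite (Dseq_ONB hip eONB).
- by apply: Dseq_ext (fun n => ip_psi n Tux) _; rewrite (Dseq_ONB hip eONB).
Qed.

Lemma quasi_basis_D : quasi_basis ip phi psi D.
Proof.
split.
- by move=> n m; rewrite (ip_psi _ (Tphi n)); case: eONB.
- exact: D_dense.
- by move=> _ [[N [a ->]]|[N [a ->]]]; apply: subspace_sum D_subspace _;
    [apply: phi_D | apply: psi_D].
- exact: D_Dseq.
move=> x y [[w adj] _] [_ [u Tuy]].
have -> : (ip x y : C R) = ip w u.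
  by rewrite -(ipJ hH y x) (adj _ _ Tuy) (ipJ hH).
have -> : (fun k => ip x (phi k) * ip (psi k) y : C R) =
          (fun k => ip w (e k) * ip (e k) u).
  apply: funext => k; rewrite (ip_phi _ adj); congr (_ * _).
  by rewrite -(ipJ hH y (psi k)) (ip_psi _ Tuy) (ipJ hH).
exact: parseval.
Qed.

Lemma restr_T_e_psi :
  oprestr (T_e_chi ip e psi) D = opinv (oprestr T (opdom (opcomp Ts T))).
Proof.
apply/seteqP; split=> [[y v] [[_ sv] Dy]|[y v] [Tvy dv]] /=.
  case: (Dy) => [[w adj] [u Tuy]].
  have su := cvg_ONB_expansion eONB (fun n => ip_psi n Tuy).
  have -> : v = u := cvg_unique (@norm_hausdorff _ _) sv su.
  split=> //.
  by apply/(dom_adjT_T ip Tlin Tuy); exists w.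
have Dy : D y by split; [apply/(dom_adjT_T ip Tlin Tvy) | exists v].
split=> //; split; first exact: (D_Dseq Dy).2.
by have := cvg_ONB_expansion eONB (fun n => ip_psi n Tvy).
Qed.

Lemma restr_T_e_phi :
  oprestr (T_e_chi ip e phi) D = oprestr Ts (opdom (opinv T)).
Proof.
apply/seteqP; split=> [[x w] [[_ sw] Dx]|[x w] [adj dx]] /=.
  case: (Dx) => [[w' adj'] dx].
  have sw' := cvg_ONB_expansion eONB (fun n => ip_phi n adj').
  by have -> : w = w' := cvg_unique (@norm_hausdorff _ _) sw sw'.
have Dx : D x by split; first exists w.
split=> //; split; first exact: (D_Dseq Dx).1.
by have := cvg_ONB_expansion eONB (fun n => ip_phi n adj).
Qed.

End ConstructingPair.

Theorem proposition3p5 (R : realType) (H : completeNormedModType (C R))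
  (ip : H -> H -> R[i]) (Hip : inner_product ip)
  (e phi psi : nat -> H) (T : op H)
  (HT : constructing_pair ip e T phi)
  (Hpsi : forall n, opadj ip (opinv T) (e n, psi n))
  (He : forall n, opdom (opcomp (opadj ip T) T) (e n) /\
                  opdom (opcomp (opinv T) (opadj ip (opinv T))) (e n)) :
  let D := opdom (opadj ip T) `&` opdom (opinv T) in
  [/\ quasi_basis ip phi psi D,
      T = opinv (opclosure (oprestr (T_e_chi ip e psi) D)) &
      opadj ip (opinv T) = opinv (opclosure (oprestr (T_e_chi ip e phi) D))].
Proof.
move=> D; have [_ Tlin _ Tcl [_ dTi _]] := HT.
split.
- exact: quasi_basis_D Hip HT Hpsi He.
- by rewrite /opclosure (restr_T_e_psi Hip HT Hpsi) (closure_opinv Hip)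
    (core_dom_adjT_T Hip Tlin Tcl) opinvK.
- by rewrite /opclosure (restr_T_e_phi Hip HT Hpsi) (core_range_adjT Hip Tlin Tcl dTi)
    opadj_opinv.
Qed.
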